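(* Let $\mathcal{O}$ be an $m$-dimensional pseudo USO with $m\geq 3$, with vertex set $[V,W]$, such that $V$ is a global sink of $\mathcal{O}$. Then $\mathcal{O}$ contains a directed cycle all of whose vertices are of the form $V\cup\{i\}$ or $V\cup\{i,j\}$ with $i,j\in W\setminus V$.
   Context: For sets $U,V$ let $U\oplus V=(U\cup V)\setminus(U\cap V)$, and for $U\subseteq W$ let $[U,W]=\{X: U\subseteq X\subseteq W\}$. A cube orientation is a directed graph with vertex set $[U,W]$ which, for every vertex $X$ and every $i\in W\setminus U$, contains exactly one of the directed edges $(X,X\oplus\{i\})$ and $(X\oplus\{i\},X)$; its dimension is $|W\setminus U|$. A face is the subgraph induced by a subinterval $[U',W']\subseteq[U,W]$; it is proper if $[U',W']\neq[U,W]$. A sink is a vertex with no outgoing edge. A pseudo USO is a cube orientation that does not have a unique global sink, but in which every proper face has a unique sink. *)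

From mathcomp Require Import all_boot.
Set Implicit Arguments. Unset Strict Implicit. Unset Printing Implicit Defensive.

Section Cube.
Variable T : finType.

Definition symdiff (A B : {set T}) : {set T} := (A :|: B) :\: (A :&: B).

Definition in_interval (U W X : {set T}) : bool := (U \subset X) && (X \subset W).

Definition cube_orientation (U W : {set T}) (E : rel {set T}) : Prop :=
  U \subset W /\
  (forall X Y, E X Y ->
     [/\ in_interval U W X, in_interval U W Y &
         exists2 i, i \in W :\: U & Y = symdiff X [set i]]) /\
  (forall X i, in_interval U W X -> i \in W :\: U ->
     E X (symdiff X [set i]) = ~~ E (symdiff X [set i]) X).

Definition dimension (U W : {set T}) : nat := #|W :\: U|.

Definition is_sink (U' W' : {set T}) (E : rel {set T}) (X : {set T}) : Prop :=
  in_interval U' W' X /\ (forall Y, in_interval U' W' Y -> ~~ E X Y).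

Definition unique_sink (U' W' : {set T}) (E : rel {set T}) : Prop :=
  exists X, is_sink U' W' E X /\ forall Y, is_sink U' W' E Y -> Y = X.

Definition face (U W U' W' : {set T}) : Prop :=
  [/\ U \subset U', U' \subset W' & W' \subset W].

Definition proper_face (U W U' W' : {set T}) : Prop :=
  face U W U' W' /\ ~ (U' = U /\ W' = W).

Definition pseudo_uso (U W : {set T}) (E : rel {set T}) : Prop :=
  [/\ cube_orientation U W E,
      ~ unique_sink U W E &
      forall U' W', proper_face U W U' W' -> unique_sink U' W' E].

Definition directed_cycle (E : rel {set T}) (s : seq {set T}) : Prop :=
  [/\ 2 <= size s, uniq s & cycle E s].

End Cube.

From mathcomp Require Import all_boot zify.
Set Implicit Arguments. Unset Strict Implicit. Unset Printing Implicit Defensive.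

(* V is a sink but not the unique one; any other sink Y must be W, since
   otherwise some k in W \ Y lies outside V and the proper face [V, W \ {k}]
   would have the two sinks V and Y.  As the proper faces [X, W] and [V, X]
   have the unique sinks W and V, every vertex X other than V and W has an
   edge going up and an edge going down.  When dim >= 3, the vertices X with
   |X \ V| = 1 or 2 are all distinct from V and W, so each of them has an
   out-neighbour among them (up from layer 1, down from layer 2), and
   following out-edges in this finite set closes a directed cycle. *)

Lemma uniq_cycle_of_successors (A : finType) (e : rel A) (P : pred A) x0 :
  irreflexive e -> P x0 -> (forall x, P x -> exists y, P y && e x y) ->
  exists s, [/\ 2 <= size s, uniq s, cycle e s & all P s].
Proof.
move=> irr Px0 succ.
have hf x : {y | P x -> P y && e x y}.
  case: (boolP (P x)) => Px; last by exists x.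
  case: (pickP [pred y | P y && e x y]) => [y Hy|none]; first by exists y.
  by exfalso; have [y Hy] := succ x Px; rewrite [_ && _]none in Hy.
pose f x := sval (hf x).
have fP x : P x -> P (f x) && e x (f x) := svalP (hf x).
have iterP n : P (iter n f x0) by elim: n => //= n /fP /andP[].
have : ~~ uniq (traject f x0 #|A|.+1).
  apply/negP => /card_uniqP; rewrite size_traject => card_traj.
  by have := max_card (mem (traject f x0 #|A|.+1)); rewrite card_traj ltnn.
case/(uniqPn x0) => i [j [ij]]; rewrite size_traject => jN.
rewrite !nth_traject ?(ltn_trans ij jN) // => eqij.
pose x := iter i f x0.
have cyc : fcycle f (orbit f x).
  apply/(@orbitPcycle _ f x 0 3); exists (j - i).-1.
  by rewrite prednK ?subn_gt0 // /x -iterD subnK // ltnW.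
have Porb y : y \in orbit f x -> P y.
  by rewrite -fconnect_orbit => /iter_findex <-; rewrite /x -iterD.
exists (orbit f x); split; last 2 first.
- apply: (sub_in_cycle (P := mem (orbit f x))) cyc; last exact/allP.
  by move=> y z /Porb /fP /andP[_] + _ /eqP <-.
- exact/allP.
- rewrite size_orbit; move: cyc; rewrite /orbit.
  case: (order f x) (order_gt0 f x) => [|[|n]] // _ /=; rewrite andbT => /eqP fx.
  by have /andP[_] := fP x (Porb x (in_orbit f x)); rewrite fx irr.
- exact: orbit_uniq.
Qed.

Section CubeOrientation.
Variables (T : finType) (E : rel {set T}).
Implicit Types U W X Y : {set T}.

Definition layer12 V W X : bool := in_interval V W X && (0 < #|X :\: V| < 3).

Lemma symdiff_set1 X k : symdiff X [set k] = if k \in X then X :\ k else k |: X.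
Proof.
apply/setP => x; rewrite /symdiff; case: ifP => kX; rewrite !inE;
  by case: (eqVneq x k) => [->|]; rewrite ?kX ?andbT ?andbF ?orbF.
Qed.

Lemma in_intervalP U W X : reflect (U \subset X /\ X \subset W) (in_interval U W X).
Proof. exact: andP. Qed.

Lemma sinkP U W X :
  reflect (is_sink U W E X)
          (in_interval U W X && [forall Y, in_interval U W Y ==> ~~ E X Y]).
Proof.
apply: (iffP andP) => [[XUW /forallP sX]|[XUW sX]]; split=> //.
  by move=> Y YUW; have := sX Y; rewrite YUW.
by apply/forallP => Y; apply/implyP; apply: sX.
Qed.

Lemma sink_face U W U' W' X :
  is_sink U W E X -> face U W U' W' -> in_interval U' W' X -> is_sink U' W' E X.
Proof.
move=> [_ sX] [UU' _ W'W] XUW'; split=> // Y /in_intervalP[U'Y YW']; apply: sX.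
by rewrite /in_interval (subset_trans UU' U'Y) (subset_trans YW' W'W).
Qed.

Lemma unique_sink_eq U W X Y :
  unique_sink U W E -> is_sink U W E X -> is_sink U W E Y -> X = Y.
Proof. by move=> [Z [_ uZ]] /uZ -> /uZ ->. Qed.

Lemma not_unique_sink U W S :
  ~ unique_sink U W E -> is_sink U W E S -> exists2 Y, is_sink U W E Y & Y != S.
Proof.
move=> not_uniq sS.
case: (pickP [pred Y | (Y != S) &&
    (in_interval U W Y && [forall Z, in_interval U W Z ==> ~~ E Y Z])]).
  by move=> Y /andP[YS /sinkP sY]; exists Y.
move=> none; case: not_uniq; exists S; split=> // Y /sinkP sY.
by apply/eqP; apply: contraFT (none Y) => YS /=; rewrite YS.
Qed.

Lemma unique_sink_out_edge U W S X :
  unique_sink U W E -> is_sink U W E S -> in_interval U W X -> X != S ->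
  exists2 Y, in_interval U W Y & E X Y.
Proof.
move=> uniqS sS XUW XS.
case: (boolP [exists Y, in_interval U W Y && E X Y]) => [/existsP[Y /andP[]]|noY].
  by exists Y.
case/eqP: XS; apply: unique_sink_eq uniqS _ sS; apply/sinkP.
rewrite XUW; apply/forallP => Y; apply/implyP => YUW.
by apply: contra noY => eXY; apply/existsP; exists Y; rewrite YUW.
Qed.

Section Edges.
Variables U W : {set T}.
Hypothesis cubeE : cube_orientation U W E.

Lemma cube_edge_up X Y : E X Y -> X \subset Y -> exists2 k, k \notin X & Y = k |: X.
Proof.
have [_ [edgeE _]] := cubeE.
case/edgeE=> _ _ [k _ ->]; rewrite symdiff_set1; case: ifP => [kX|kX _].
  by move/subsetP/(_ k kX); rewrite !inE eqxx.
by exists k; rewrite ?kX.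
Qed.

Lemma cube_edge_down X Y : E X Y -> Y \subset X -> exists2 k, k \in X & Y = X :\ k.
Proof.
have [_ [edgeE _]] := cubeE.
case/edgeE=> _ _ [k _ ->]; rewrite symdiff_set1; case: ifP => [kX _|kX].
  by exists k.
by move/subsetP/(_ k (setU11 k X)); rewrite kX.
Qed.

Lemma cube_orientation_irrefl : irreflexive E.
Proof.
move=> X; apply/negP => /cube_edge_up/(_ (subxx X))[k kX eqX].
by move: kX; rewrite eqX setU11.
Qed.

End Edges.

Section PseudoUSO.
Variables V W : {set T}.
Hypothesis usoE : pseudo_uso V W E.

Lemma pseudo_uso_top_sink : is_sink V W E V -> is_sink V W E W.
Proof.
have [[VW _] not_uniq faces] := usoE; move=> sV.
have [Y sY YV] := not_unique_sink not_uniq sV.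
have [/in_intervalP[VY YW] _] := sY.
have [eYW|neYW] := eqVneq Y W; first by rewrite -eYW in sY *.
have [k kW kY] : exists2 k, k \in W & k \notin Y.
  by apply/subsetPn; apply: contraNN neYW => WY; rewrite eqEsubset YW.
have kV : k \notin V by apply: contra kY; apply: subsetP.
have fc : proper_face V W V (W :\ k).
  split; last by case=> _ /setP/(_ k); rewrite !inE eqxx kW.
  by split; rewrite ?subD1set // subsetD1 VW kV.
case/eqP: YV; apply: unique_sink_eq (faces _ _ fc) _ _.
  by apply: sink_face sY fc.1 _; rewrite /in_interval VY subsetD1 YW kY.
by apply: sink_face sV fc.1 _; rewrite /in_interval subxx subsetD1 VW kV.
Qed.

Lemma pseudo_uso_up_edge X :
  is_sink V W E W -> in_interval V W X -> X != V -> X != W ->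
  exists2 k, k \in W :\: X & E X (k |: X).
Proof.
have [cubeE _ faces] := usoE; move=> sW /in_intervalP[VX XW] XV XW'.
have fc : proper_face V W X W by split=> //; case=> /eqP; rewrite (negbTE XV).
have sW' : is_sink X W E W.
  by apply: sink_face sW fc.1 _; rewrite /in_interval XW subxx.
have [|Y /in_intervalP[XY YW] eXY] := unique_sink_out_edge (faces _ _ fc) sW' _ XW'.
  by apply/in_intervalP.
have [k kX defY] := cube_edge_up cubeE eXY XY.
exists k; last by rewrite -defY.
by rewrite inE kX (subsetP YW) // defY setU11.
Qed.

Lemma pseudo_uso_down_edge X :
  is_sink V W E V -> in_interval V W X -> X != V -> X != W ->
  exists2 k, k \in X :\: V & E X (X :\ k).
Proof.
have [cubeE _ faces] := usoE; move=> sV /in_intervalP[VX XW] XV XW'.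
have fc : proper_face V W V X by split=> //; case=> _ /eqP; rewrite (negbTE XW').
have sV' : is_sink V X E V.
  by apply: sink_face sV fc.1 _; rewrite /in_interval VX subxx.
have [|Y /in_intervalP[VY YX] eXY] := unique_sink_out_edge (faces _ _ fc) sV' _ XV.
  by apply/in_intervalP.
have [k kX defY] := cube_edge_down cubeE eXY YX.
exists k; last by rewrite -defY.
rewrite inE kX andbT; apply: contraTN kX => kV.
by have := subsetP VY k kV; rewrite defY !inE eqxx.
Qed.

Lemma pseudo_uso_layer12_step X :
  is_sink V W E V -> 3 <= #|W :\: V| ->
  layer12 V W X -> exists Y, layer12 V W Y && E X Y.
Proof.
move=> sV dimW /and3P[XVW X_gt0 X_lt3].
have XV : X != V by apply: contraTneq X_gt0 => ->; rewrite setDv cards0.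
have XW : X != W by apply: contraTneq X_lt3 => ->; rewrite -leqNgt.
have /in_intervalP[VX XW0] := XVW.
have [X_lt2|X_ge2] := ltnP #|X :\: V| 2.
- have [k /setDP[kW kX] eXk] :=
    pseudo_uso_up_edge (pseudo_uso_top_sink sV) XVW XV XW.
  have kV : k \notin V by apply: contra kX; apply: subsetP.
  exists (k |: X); rewrite eXk andbT /layer12.
  have -> : (k |: X) :\: V = k |: (X :\: V).
    by apply/setP => x; rewrite !inE; case: eqP => // ->; rewrite kV.
  rewrite cardsU1 !inE (negbTE kX) andbF /=.
  by rewrite /in_interval subUset sub1set kW XW0 (subset_trans VX) ?subsetUr.
- have [k /setDP[kX kV] eXk] := pseudo_uso_down_edge sV XVW XV XW.
  exists (X :\ k); rewrite eXk andbT /layer12.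
  have -> : (X :\ k) :\: V = (X :\: V) :\ k.
    by apply/setP => x; rewrite !inE andbCA.
  have := cardsD1 k (X :\: V); rewrite !inE kX kV /= => card_XV.
  rewrite /in_interval subsetD1 VX kV (subset_trans (subD1set X k)) //=.
  lia.
Qed.

End PseudoUSO.

Lemma layer12_vertex V W X :
  layer12 V W X ->
  (exists2 i, i \in W :\: V & X = V :|: [set i]) \/
  (exists i j, [/\ i \in W :\: V, j \in W :\: V & X = V :|: [set i; j]]).
Proof.
move=> /andP[/in_intervalP[VX XW] card_XV].
have defX : X = V :|: (X :\: V).
  by rewrite setDE setUIr setUCr setIT; apply/esym/setUidPr.
have /subsetP sub_XV : X :\: V \subset W :\: V by apply: setSD.
have : (#|X :\: V| == 1) || (#|X :\: V| == 2) by lia.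
case/orP => [/cards1P[i def_XV] | /cards2P[i [j [_ def_XV]]]].
  left; exists i; last by rewrite defX def_XV.
  by rewrite sub_XV // def_XV set11.
right; exists i, j; split; last by rewrite defX def_XV.
  by rewrite sub_XV // def_XV set21.
by rewrite sub_XV // def_XV set22.
Qed.

End CubeOrientation.

Theorem lemma3p4 (T : finType) (V W : {set T}) (E : rel {set T}) (m : nat) :
  pseudo_uso V W E ->
  dimension V W = m -> 3 <= m ->
  is_sink V W E V ->
  exists s : seq {set T},
    directed_cycle E s /\
    (forall X, X \in s ->
       (exists2 i, i \in W :\: V & X = V :|: [set i]) \/
       (exists i j, [/\ i \in W :\: V, j \in W :\: V & X = V :|: [set i; j]])).
Proof.
move=> usoE <-; rewrite /dimension => dim_ge3 sV.
have [cubeE _ _] := usoE; have [VW _] := cubeE.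
have [i /setDP[iW iV]] : exists i, i \in W :\: V by apply/card_gt0P; lia.
have start : layer12 V W (i |: V).
  rewrite /layer12 /in_interval subsetUr subUset sub1set iW VW.
  have -> : (i |: V) :\: V = [set i].
    by apply/setP => x; rewrite !inE; case: eqVneq => [->|_]; rewrite ?iV //= andNb.
  by rewrite cards1.
have [s [size_s uniq_s cycle_s /allP layer12_s]] :=
  uniq_cycle_of_successors (cube_orientation_irrefl cubeE) start
    (fun X => pseudo_uso_layer12_step usoE sV dim_ge3).
by exists s; split=> // X /layer12_s /layer12_vertex.
Qed.
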